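(* If $(w,w')$ is a pair of infinite words over $A_q$ accepted by $\mathcal{D}_{p/q}$ (i.e. the run of $\mathcal{D}_{p/q}$ from state $0$ on input $w$ exists and produces output $w'$), then $\widehat{\mathcal{T}_{p/q}}$ accepts the word $\mathrm{m}(w')\ominus w$.
   Context: Let $p>q>1$ be coprime integers, $A_q=\{0,\dots,q-1\}$ and $B=\{p-(2q-1),\dots,p-1\}$. For $n\in\mathbb{N}$ and $a\in\mathbb{Z}$, let $\tau(n,a)=\frac{np+a}{q}$, defined only when $q$ divides $np+a$. For $a\in B$ let $\omega(a)=\{(b,c)\in A_q\times A_q : c-b=a-(p-q)\}$. The transducer $\mathcal{D}_{p/q}$ has state set $\mathbb{N}$, input and output alphabet $A_q$, initial state $0$, and a transition $n\xrightarrow{b|c}\tau(n,a)$ (input $b$, output $c$) for every $n\in\mathbb{N}$, $a\in B$ with $\tau(n,a)$ defined, and $(b,c)\in\omega(a)$; no other transitions. Let $\widehat{\mathcal{T}_{p/q}}$ be the deterministic automaton with state set $\mathbb{N}$, alphabet $B$, initial state $0$, and transitions $n\xrightarrow{a}\tau(n,a)$ for $a\in B$ with $\tau(n,a)$ defined; an infinite word is accepted if each finite prefix labels a path from $0$. The map $\mathrm{m}:A_q\to\{p-q,\dots,p-1\}$ sends $a$ to the greatest integer strictly smaller than $p$ that is congruent to $a+p$ modulo $q$; it is extended letter-wise to infinite words. The operation $\ominus$ denotes letter-wise subtraction of infinite words. *)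

From Stdlib Require Import ZArith Lia.
Open Scope Z_scope.

Definition inA (q b : Z) : Prop := 0 <= b < q.

Definition inB (p q a : Z) : Prop := p - (2*q - 1) <= a <= p - 1.

(* tau(n,a) = m : the state m (a natural number, since the state set is N)
   equals (n p + a)/q, which is defined only when q divides n p + a. *)
Definition tau_is (p q : Z) (n : nat) (a : Z) (m : nat) : Prop :=
  Z.of_nat m * q = Z.of_nat n * p + a.

Definition omega (p q a b c : Z) : Prop :=
  inA q b /\ inA q c /\ c - b = a - (p - q).

Definition D_trans (p q : Z) (n : nat) (b c : Z) (m : nat) : Prop :=
  exists a, inB p q a /\ tau_is p q n a m /\ omega p q a b c.

Definition D_accepts (p q : Z) (w w' : nat -> Z) : Prop :=
  exists run : nat -> nat, run 0%nat = 0%nat /\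
    forall i : nat, D_trans p q (run i) (w i) (w' i) (run (S i)).

Definition T_trans (p q : Z) (n : nat) (a : Z) (m : nat) : Prop :=
  inB p q a /\ tau_is p q n a m.

Definition T_accepts (p q : Z) (u : nat -> Z) : Prop :=
  forall k : nat, exists s : nat -> nat, s 0%nat = 0%nat /\
    forall i : nat, (i < k)%nat -> T_trans p q (s i) (u i) (s (S i)).

(* m(c) = the greatest integer strictly smaller than p that is congruent
   to c + p modulo q (explicit formula; see mmap_spec below). *)
Definition mmap (p q c : Z) : Z := p - 1 - ((- 1 - c) mod q).

Lemma mmap_spec (p q c : Z) : 0 < q ->
  mmap p q c < p /\ (mmap p q c - (c + p)) mod q = 0 /\
  (forall y, y < p -> (y - (c + p)) mod q = 0 -> y <= mmap p q c).
Proof.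
  intros Hq. unfold mmap.
  pose proof (Z.mod_pos_bound (-1 - c) q Hq) as Hb.
  pose proof (Z.div_mod (-1 - c) q ltac:(lia)) as Hd.
  set (r := (-1 - c) mod q) in *. set (t := (-1 - c) / q) in *.
  split; [lia|]. split.
  - replace (p - 1 - r - (c + p)) with (t * q) by lia.
    apply Z.mod_mul; lia.
  - intros y Hy Hm.
    pose proof (Z.div_mod (y - (c + p)) q ltac:(lia)) as Hd2.
    rewrite Hm in Hd2. set (s := (y - (c + p)) / q) in *.
    (* y = c + p + q s ; p-1-r = c + p + q (-t) ... *)
    assert (H1 : q * (s - t - 1) < 0) by lia.
    assert (H2 : s - t - 1 < 0).
    { destruct (Z.lt_ge_cases (s - t - 1) 0) as [h|h]; [exact h|].
      pose proof (Z.mul_nonneg_nonneg q (s - t - 1) ltac:(lia) h). lia. }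
    assert (H3 : q * (t - s) >= 0) by nia.
    lia.
Qed.

Definition wminus (u v : nat -> Z) : nat -> Z := fun i => u i - v i.

(* On the alphabet A_q the map m is the translation c |-> c + p - q, so for a
   transition n --b|c--> tau(n,a) of D_{p/q} the letter m(c) - b equals a.
   Hence every run of D_{p/q} on (w, w') is, state by state, a run of
   \hat{T}_{p/q} on m(w') - w, and every prefix of that word labels a path. *)
From Stdlib Require Import ZArith Lia.
Open Scope Z_scope.

Lemma mmap_inA (p q c : Z) : inA q c -> mmap p q c = c + p - q.
Proof.
  unfold inA, mmap; intros Hc.
  rewrite <- (Z.mod_unique (-1 - c) q (-1) (q - 1 - c)); lia.
Qed.

Lemma D_trans_T_trans (p q : Z) (n m : nat) (b c : Z) :
  D_trans p q n b c m -> T_trans p q n (mmap p q c - b) m.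
Proof.
  intros [a [Ha [Htau [_ [Hc Hcb]]]]].
  rewrite mmap_inA by exact Hc.
  replace (c + p - q - b) with a by lia.
  split; assumption.
Qed.

Lemma D_accepts_T_accepts (p q : Z) (w w' : nat -> Z) :
  D_accepts p q w w' ->
  T_accepts p q (wminus (fun i => mmap p q (w' i)) w).
Proof.
  intros [run [Hrun0 Hrun]] k.
  exists run; split; [exact Hrun0|].
  intros i _; apply D_trans_T_trans, Hrun.
Qed.

Theorem mainTheorem7 (p q : Z) (w w' : nat -> Z) :
  1 < q -> q < p -> Z.gcd p q = 1 ->
  D_accepts p q w w' ->
  T_accepts p q (wminus (fun i => mmap p q (w' i)) w).
Proof.
  intros _ _ _; exact (@D_accepts_T_accepts p q w w').
Qed.
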